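(* For every $n$, the quotient lattice $S_n/\mathcal{H}(\{3412,2413\})_n$ is isomorphic to the subposet of the weak order on $S_n$ induced by the twisted Baxter permutations.
   Context: $S_n$: permutations of $[n]$ in one-line notation with the right weak order (inclusion of sets of inverted value pairs), a lattice. A permutation $x$ is a twisted Baxter permutation if (i) in every occurrence of the pattern 2413 in $x$, the entries playing the roles of ''4'' and ''1'' are not adjacent in $x$, and (ii) in every occurrence of 3412, the ''4'' and ''1'' are not adjacent. (Pattern $y\in S_k$ occurs in $x$ if there are $i_1<\dots<i_k$ with $x_{i_p}<x_{i_q}\iff y_p<y_q$.) Join-irreducibles of $S_n$ are permutations with exactly one descent; $\gamma_*$ is the unique element they cover. A congruence contracts $\gamma$ if $\gamma\equiv\gamma_*$. $u\times v=u_1\cdots u_p(p+v_1)\cdots(p+v_q)$; $\mathrm{st}(a_1..a_k)$ is the $u\in S_k$ with $u_i<u_j\iff a_i<a_j$. A family $\{\Theta_n\}_{n\ge0}$ of lattice congruences on $S_n$ is translational if $u\times v\equiv u'\times v'$ mod $\Theta_{p+q}$ iff $u\equiv u'$ mod $\Theta_p$ and $v\equiv v'$ mod $\Theta_q$; insertional if for every $p$-subset $Q\subseteq[p+q]$, with $\varphi_Q(u,v)$ the unique $x\in S_{p+q}$ with $\{x_1..x_p\}=Q$, $\mathrm{st}(x_1..x_p)=u$, $\mathrm{st}(x_{p+1}..x_{p+q})=v$, we have $u\equiv u',v\equiv v'\Rightarrow\varphi_Q(u,v)\equiv\varphi_Q(u',v')$; an $\mathcal{H}$-family if both. For a set $C$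 of join-irreducibles, $\{\mathcal{H}(C)_n\}$ is the smallest $\mathcal{H}$-family contracting every element of $C$. The quotient $L/\Theta$ is the set of classes with $[a]\le[b]$ iff some $x\in[a],y\in[b]$ have $x\le y$. *)

From mathcomp Require Import all_boot all_order all_fingroup.
From Stdlib Require Lists.List.
Set Implicit Arguments. Unset Strict Implicit. Unset Printing Implicit Defensive.

(* Permutations of [n] are 'S_n = {perm 'I_n}; the one-line notation of x is
   x_i = x i (values and positions are 0-indexed). *)

Definition inv_set n (x : 'S_n) : {set 'I_n * 'I_n} :=
  [set ab : 'I_n * 'I_n | (ab.1 < ab.2)%N && ((x^-1)%g ab.2 < (x^-1)%g ab.1)%N].

Definition weak_le n (x y : 'S_n) : Prop := inv_set x \subset inv_set y.

Definition weak_lt n (x y : 'S_n) : Prop := weak_le x y /\ x <> y.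

Definition covers n (g x : 'S_n) : Prop :=
  weak_lt g x /\ forall z, weak_le g z -> weak_le z x -> z = g \/ z = x.

Definition is_join n (x y j : 'S_n) : Prop :=
  [/\ weak_le x j, weak_le y j & forall w, weak_le x w -> weak_le y w -> weak_le j w].

Definition is_meet n (x y m : 'S_n) : Prop :=
  [/\ weak_le m x, weak_le m y & forall w, weak_le w x -> weak_le w y -> weak_le w m].

Definition lattice_congruence n (R : 'S_n -> 'S_n -> Prop) : Prop :=
  [/\ (forall x, R x x), (forall x y, R x y -> R y x),
      (forall x y z, R x y -> R y z -> R x z),
      (forall x y z j j', R x y -> is_join x z j -> is_join y z j' -> R j j')
    & (forall x y z m m', R x y -> is_meet x z m -> is_meet y z m' -> R m m')].

(* a congruence contracts the join-irreducible g when g == g_* *)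
Definition contracts n (R : 'S_n -> 'S_n -> Prop) (g : 'S_n) : Prop :=
  exists gs, covers gs g /\ R g gs.

Definition family := forall n, 'S_n -> 'S_n -> Prop.

(* u x v = u_1 .. u_p (p+v_1) .. (p+v_q) *)
Definition dsum_fun p q (u : 'S_p) (v : 'S_q) (i : 'I_(p + q)) : 'I_(p + q) :=
  unsplit (match split i with inl j => inl (u j) | inr k => inr (v k) end).

Lemma dsum_inj p q (u : 'S_p) (v : 'S_q) : injective (dsum_fun u v).
Proof.
move=> i j; rewrite /dsum_fun => /(can_inj unsplitK) => E.
apply: (can_inj splitK).
by case: (split i) (split j) E => [a|a] [b|b] // [/perm_inj->].
Qed.

Definition dsum p q (u : 'S_p) (v : 'S_q) : 'S_(p + q) := perm (@dsum_inj p q u v).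

(* x = phi_Q(u,v): {x_1..x_p} = Q, st(x_1..x_p) = u, st(x_{p+1}..x_{p+q}) = v *)
Definition is_phi p q (Q : {set 'I_(p + q)}) (u : 'S_p) (v : 'S_q)
  (x : 'S_(p + q)) : Prop :=
  [/\ forall i : 'I_p, x (lshift q i) \in Q,
      forall i j : 'I_p, (x (lshift q i) < x (lshift q j))%N = (u i < u j)%N
    & forall i j : 'I_q, (x (rshift p i) < x (rshift p j))%N = (v i < v j)%N].

Definition translational (T : family) : Prop :=
  forall p q (u u' : 'S_p) (v v' : 'S_q),
    T (p + q) (dsum u v) (dsum u' v') <-> T p u u' /\ T q v v'.

Definition insertional (T : family) : Prop :=
  forall p q (Q : {set 'I_(p + q)}) (u u' : 'S_p) (v v' : 'S_q) (x x' : 'S_(p + q)),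
    #|Q| = p -> is_phi Q u v x -> is_phi Q u' v' x' ->
    T p u u' -> T q v v' -> T (p + q) x x'.

Definition H_family (T : family) : Prop :=
  [/\ forall n, lattice_congruence (T n), translational T & insertional T].

Definition HC (C : seq {k : nat & 'S_k}) : family :=
  fun n x y => forall T : family, H_family T ->
    (forall c, Stdlib.Lists.List.In c C -> contracts (T (projT1 c)) (projT2 c)) -> T n x y.
Arguments HC : clear implicits.

Definition perm_of_seq n (s : seq nat) : 'S_n :=
  odflt 1%g [pick x : 'S_n | [forall i : 'I_n, val (x i) == nth 0%N s i]].

Definition p3412 : 'S_4 := perm_of_seq 4 [:: 2; 3; 0; 1]%N.
Definition p2413 : 'S_4 := perm_of_seq 4 [:: 1; 3; 0; 2]%N.

Definition occurrence k n (y : 'S_k) (x : 'S_n) (f : 'I_k -> 'I_n) : Prop :=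
  (forall a b : 'I_k, (a < b)%N -> (f a < f b)%N) /\
  (forall a b : 'I_k, (x (f a) < x (f b))%N = (y a < y b)%N).

(* in every occurrence of y (of size 4), the entries playing the roles of
   "4" (value 3) and "1" (value 0) are not adjacent in x *)
Definition four_one_nonadjacent n (y : 'S_4) (x : 'S_n) : Prop :=
  forall f : 'I_4 -> 'I_n, occurrence y x f ->
    let i4 := f ((y^-1)%g (inord 3)) in
    let i1 := f ((y^-1)%g (inord 0)) in
    i1 <> i4.+1 :> nat /\ i4 <> i1.+1 :> nat.

Definition twisted_baxter n (x : 'S_n) : Prop :=
  four_one_nonadjacent p2413 x /\ four_one_nonadjacent p3412 x.

Definition is_class n (R : 'S_n -> 'S_n -> Prop) (A : {set 'S_n}) : Prop :=
  exists a, forall x, x \in A <-> R a x.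

Definition quot_le n (A B : {set 'S_n}) : Prop :=
  exists x y, [/\ x \in A, y \in B & weak_le x y].

Definition C_9p7 : seq {k : nat & 'S_k} :=
  [:: existT _ 4 p3412; existT _ 4 p2413].

From Pilot Require Import Defs.
From mathcomp Require Import all_boot all_order all_fingroup zify.
From Stdlib Require Import ProofIrrelevance.
Set Implicit Arguments. Unset Strict Implicit. Unset Printing Implicit Defensive.

(* The congruence H({3412, 2413}) is the relation [theta]: x and y are congruent when,
   for every value t and every interval of values ending just below t or starting
   just above t, t precedes (follows) the whole interval in x exactly when it does
   in y.  Swapping the adjacent "4" and "1" of an occurrence of 2413 or 3412 goes
   down in the weak order and preserves [theta], so every class contains a twisted
   Baxter permutation; a scanning argument shows that such an element lies below
   every element of every class above its own, so it is the minimum of its class and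
   classes are ordered like their minima.  [theta] is an H-family contracting 3412
   and 2413.  Conversely, by induction on n, every H-family contracting them
   contracts all these swaps: an occurrence that does not span all positions lives
   in a smaller block, and otherwise moving the largest or smallest entry to the
   front turns the swap into a parallel edge of the weak order. *)

Lemma card_ord_lt n k : k <= n -> #|[set i : 'I_n | i < k]| = k.
Proof.
move=> kn; have widen_inj : injective (widen_ord kn) by move=> i j /(congr1 val) /= /val_inj.
rewrite -[RHS](card_ord k) -(card_imset _ widen_inj); apply: eq_card => i.
rewrite !inE; apply/idP/imsetP => [ik|[j _ ->]]; last exact: (ltn_ord j).
by exists (Ordinal ik) => //; apply: val_inj.
Qed.

Lemma perm_rank n (s : 'S_n) v : s v = #|[set u | s u < s v]| :> nat.
Proof.
have -> : [set u | s u < s v] = s @^-1: [set i : 'I_n | i < s v] by apply/setP => u; rewrite !inE.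
by rewrite card_preimset ?card_ord_lt //; [apply: ltnW | apply: perm_inj].
Qed.

Section WeakOrder.
Variable n : nat.
Implicit Types (x y z : 'S_n) (u v : 'I_n).

Definition before x u v := (x^-1)%g u < (x^-1)%g v.

Lemma before_irr x u : before x u u = false. Proof. exact: ltnn. Qed.

Lemma before_trans x u v w : before x u v -> before x v w -> before x u w.
Proof. exact: ltn_trans. Qed.

Lemma before_asym x u v : before x u v -> before x v u = false.
Proof. by rewrite /before => /ltnW; rewrite leqNgt => /negbTE. Qed.

Lemma beforeN x u v : u != v -> before x u v = ~~ before x v u.
Proof.
move=> uv; rewrite /before -leqNgt ltn_neqAle.
suff -> : (x^-1)%g u != (x^-1)%g v :> nat by [].
by apply: contra uv => /eqP/val_inj/perm_inj ->.
Qed.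

Lemma before_perm x i j : before x (x i) (x j) = (i < j).
Proof. by rewrite /before !permK. Qed.

Lemma inv_setE x a b : ((a, b) \in inv_set x) = (a < b) && before x b a.
Proof. by rewrite inE. Qed.

Lemma weak_leP x y :
  weak_le x y <-> (forall a b : 'I_n, a < b -> before x b a -> before y b a).
Proof.
split=> [le_xy a b ab|inv_xy].
  by move=> bx; have := subsetP le_xy (a, b); rewrite !inv_setE ab bx => /(_ isT).
by apply/subsetP => -[a b]; rewrite !inv_setE => /andP[ab /(inv_xy _ _ ab)->]; rewrite ab.
Qed.

Lemma weak_le_refl x : weak_le x x. Proof. exact: subxx. Qed.

Lemma before_inj x y : (forall u v, before x u v = before y u v) -> x = y.
Proof.
move=> xy; suff E : (x^-1)%g = (y^-1)%g by rewrite -(invgK x) E invgK.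
apply/permP => v; apply: val_inj; rewrite /= perm_rank [in RHS]perm_rank.
by apply: eq_card => u; rewrite !inE -/(before x u v) -/(before y u v) xy.
Qed.

Lemma weak_le_anti x y : weak_le x y -> weak_le y x -> x = y.
Proof.
move=> /weak_leP le_xy /weak_leP le_yx; apply: before_inj => u v.
have [->|uv] := eqVneq u v; first by rewrite !before_irr.
have [lt|lt|/val_inj E] := ltngtP u v; last by rewrite E eqxx in uv.
  rewrite (beforeN _ uv) [RHS](beforeN _ uv); congr negb.
  by apply/idP/idP; [apply: le_xy|apply: le_yx].
by apply/idP/idP; [apply: le_xy|apply: le_yx].
Qed.

Definition reverse x : 'S_n := (perm (@rev_ord_inj n) * x)%g.

Lemma reverseE x i : reverse x i = x (rev_ord i).
Proof. by rewrite permM permE. Qed.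

Lemma reverseK : involutive reverse.
Proof. by move=> x; apply/permP => i; rewrite !reverseE rev_ordK. Qed.

Lemma reverseV x u : (reverse x)^-1%g u = rev_ord ((x^-1)%g u).
Proof. by apply: (@perm_inj _ (reverse x)); rewrite permKV reverseE rev_ordK permKV. Qed.

Lemma before_reverse x u v : before (reverse x) u v = before x v u.
Proof.
rewrite /before !reverseV /=.
by have := ltn_ord ((x^-1)%g u); have := ltn_ord ((x^-1)%g v); lia.
Qed.

Lemma weak_le_reverse x y : weak_le x y <-> weak_le (reverse y) (reverse x).
Proof.
rewrite !weak_leP; split=> le_xy a b ab; have ba : a != b by rewrite neq_ltn ab.
  by rewrite !before_reverse !(beforeN _ ba); apply: contra; apply: le_xy.
move=> bx; apply: contraT => nby.
by have := le_xy a b ab; rewrite !before_reverse !(beforeN _ ba) nby bx => /(_ isT).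
Qed.

Lemma join_reverse x y j : is_join x y j -> is_meet (reverse x) (reverse y) (reverse j).
Proof.
case=> le_xj le_yj least; split; try by rewrite -weak_le_reverse.
move=> w wx wy; rewrite -[w]reverseK -weak_le_reverse.
by apply: least; rewrite weak_le_reverse reverseK.
Qed.

Definition edge y x (e : 'I_n * 'I_n) := inv_set x = e |: inv_set y /\ e \notin inv_set y.

Lemma edge_weak_le y x e : edge y x e -> weak_le y x.
Proof. by case=> E _; rewrite /weak_le E subsetUr. Qed.

Lemma edge_card y x e : edge y x e -> #|inv_set y| < #|inv_set x|.
Proof. by case=> -> ney; rewrite cardsU1 ney. Qed.

Lemma edge_covers y x e : edge y x e -> covers y x.
Proof.
move=> [E ney]; split.
  split; first exact: edge_weak_le (conj E ney).
  by move=> yx; move: ney; rewrite yx E setU11.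
move=> z yz zx; have [ez|nez] := boolP (e \in inv_set z).
  by right; apply: weak_le_anti => //; rewrite /weak_le E subUset sub1set ez.
left; apply: weak_le_anti => //; apply/subsetP => f fz.
by have := subsetP zx f fz; rewrite E in_setU1 => /orP[/eqP Ef|//]; rewrite -Ef fz in nez.
Qed.

Lemma covers_edge_unique s y x e : covers s x -> edge y x e ->
  (forall z, weak_le z x -> e \in inv_set z -> z = x) -> s = y.
Proof.
move=> [[sx sNx] cov] [E ney] only_x.
have nes : e \notin inv_set s by apply/negP => /(only_x _ sx).
have sy : weak_le s y.
  apply/subsetP => f fs; have := subsetP sx f fs; rewrite E in_setU1.
  by case/orP => // /eqP Ef; rewrite -Ef fs in nes.
case: (cov y sy (edge_weak_le (conj E ney))) => // yx.
by move: ney; rewrite yx E setU11.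
Qed.

Lemma lattice_congruence_edge (R : 'S_n -> 'S_n -> Prop) : lattice_congruence R ->
  forall y1 x1 y2 x2 e, edge y1 x1 e -> edge y2 x2 e -> weak_le y1 y2 ->
  R y1 x1 <-> R y2 x2.
Proof.
case=> _ _ _ Rjoin Rmeet y1 x1 y2 x2 e [E1 ne1] [E2 ne2] le12.
(* [x2] is the join of [x1] and [y2], and [y1] is their meet. *)
have le_x12 : weak_le x1 x2 by rewrite /weak_le E1 E2 setUS.
have J1 : is_join y1 y2 y2 by split=> //; apply: weak_le_refl.
have J2 : is_join x1 y2 x2.
  split=> //; first exact: edge_weak_le (conj E2 ne2).
  move=> w x1w y2w; rewrite /weak_le E2 subUset y2w andbT sub1set.
  by apply: (subsetP x1w); rewrite E1 setU11.
have M1 : is_meet y2 x1 y1.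
  split=> //; first exact: edge_weak_le (conj E1 ne1).
  move=> w wy2 wx1; apply/subsetP => f fw.
  have := subsetP wx1 f fw; rewrite E1 in_setU1 => /orP[/eqP Ef|//].
  by move: (subsetP wy2 f fw); rewrite Ef (negbTE ne2).
have M2 : is_meet x2 x1 x1 by split=> //; apply: weak_le_refl.
by split=> R1; [apply: Rjoin R1 J1 J2 | apply: Rmeet R1 M1 M2].
Qed.

End WeakOrder.

Section Swap.
Variable n : nat.
Implicit Types (x y : 'S_n) (i j : 'I_n).

Definition swap_pos x i j : 'S_n := (tperm i j * x)%g.

Lemma swap_posE x i j k : swap_pos x i j k = x (tperm i j k).
Proof. by rewrite permM. Qed.

Lemma swap_posV x i j u : (swap_pos x i j)^-1%g u = tperm i j ((x^-1)%g u).
Proof. by rewrite /swap_pos invMg tpermV permM. Qed.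

Lemma tperm_adj_lt i j (p q : 'I_n) : j = i.+1 :> nat ->
  (p \notin [:: i; j]) || (q \notin [:: i; j]) -> (tperm i j p < tperm i j q) = (p < q).
Proof.
rewrite !inE -!(inj_eq val_inj) /= => ij.
by case: tpermP => [->|->|/eqP pi /eqP pj]; case: tpermP => [->|->|/eqP qi /eqP qj];
  rewrite ij; lia.
Qed.

Lemma before_swap_pos x i j u v : j = i.+1 :> nat ->
  (u \notin [:: x i; x j]) || (v \notin [:: x i; x j]) ->
  before (swap_pos x i j) u v = before x u v.
Proof.
move=> ij uv; rewrite /before !swap_posV tperm_adj_lt //.
by rewrite !inE -!(can2_eq (permKV x) (permK x)) in uv *.
Qed.

Lemma swap_pos_edge x i j : j = i.+1 :> nat -> x j < x i ->
  edge (swap_pos x i j) x (x j, x i).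
Proof.
move=> ij lt_ji; have ji_inv : ~~ before (swap_pos x i j) (x i) (x j).
  by rewrite /before !swap_posV !permK tpermL tpermR ij -leqNgt.
split; last by rewrite inv_setE (negbTE ji_inv) andbF.
apply/setP => -[u v]; rewrite in_setU1 !inv_setE.
have [[-> ->]|uv] := eqVneq (u, v) (x j, x i).
  by rewrite lt_ji before_perm ij ltnSn.
rewrite /=; have [lt_uv|//] := ltnP u v; rewrite before_swap_pos //.
by move: uv lt_uv lt_ji; rewrite !inE xpair_eqE -!(inj_eq val_inj) /=; lia.
Qed.

End Swap.

Section Theta.
Variable n : nat.
Implicit Types (x y z : 'S_n) (i j c d t : 'I_n).

(* An occurrence of 2413 or 3412 at positions c, i, j, d with its "4" and "1" adjacent. *)
Definition adj41 x i j c d :=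
  [&& j == i.+1 :> nat, c < i, j < d, x j < x c < x i & x j < x d < x i].

Definition adj41_free x := [forall i, forall j, forall c, forall d, ~~ adj41 x i j c d].

Lemma adj41_freeP x : reflect (forall i j c d, ~~ adj41 x i j c d) (adj41_free x).
Proof.
apply: (iffP forallP) => [free i j c d|free i].
  by have /forallP/(_ j)/forallP/(_ c)/forallP := free i.
by do 3!apply/forallP => ?; apply: free.
Qed.

Definition oriented x t c (dir : bool) := if dir then before x t c else before x c t.

Definition oriented_all x t lo hi dir :=
  [forall c : 'I_n, (lo <= c < hi) ==> oriented x t c dir].

Definition theta x y := forall t (lo hi : nat) dir, hi = t :> nat \/ lo = t.+1 ->
  oriented_all x t lo hi dir = oriented_all y t lo hi dir.

Lemma theta_refl x : theta x x. Proof. by []. Qed.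

Lemma theta_sym x y : theta x y -> theta y x.
Proof. by move=> xy t lo hi dir /xy. Qed.

Lemma theta_trans x y z : theta x y -> theta y z -> theta x z.
Proof. by move=> xy yz t lo hi dir adj; rewrite xy ?yz. Qed.

Lemma oriented_all_eq x y t lo hi dir :
  (forall c, lo <= c < hi -> oriented x t c dir = oriented y t c dir) ->
  oriented_all x t lo hi dir = oriented_all y t lo hi dir.
Proof. by move=> xy; apply: eq_forallb => c; case: (boolP (lo <= c < hi)) => //= /xy. Qed.

Lemma oriented_all_straddle x t lo hi dir c c' :
  lo <= c < hi -> lo <= c' < hi -> before x c t -> before x t c' ->
  oriented_all x t lo hi dir = false.
Proof.
move=> cI c'I ct tc'; apply/negbTE/forallPn.
by case: dir; [exists c; rewrite cI /= before_asym | exists c'; rewrite c'I /= before_asym].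
Qed.

Lemma oriented_all_reverse x t lo hi dir :
  oriented_all (reverse x) t lo hi dir = oriented_all x t lo hi (~~ dir).
Proof. by apply: eq_forallb => c; case: dir; rewrite /oriented /= before_reverse. Qed.

Lemma theta_reverse x y : theta x y -> theta (reverse x) (reverse y).
Proof. by move=> xy t lo hi dir adj; rewrite !oriented_all_reverse xy. Qed.

Lemma oriented_all_below x y t lo hi : weak_le x y -> hi <= t ->
  oriented_all x t lo hi true -> oriented_all y t lo hi true.
Proof.
move=> /weak_leP xy hit /forallP tx; apply/forallP => c; apply/implyP => cI.
by apply: xy; [case/andP: cI => _ /leq_trans; apply | have := tx c; rewrite cI].
Qed.

Lemma oriented_all_above x y t lo hi : weak_le x y -> t < lo ->
  oriented_all x t lo hi false -> oriented_all y t lo hi false.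
Proof.
move=> /weak_leP xy tlo /forallP tx; apply/forallP => c; apply/implyP => cI.
by apply: xy; [case/andP: cI => /(leq_trans tlo) | have := tx c; rewrite cI].
Qed.

(* Only the relative order of the values [x j < x i] changes, and every
   interval adjacent to one of them that contains the other also contains
   [x c], which precedes both, and [x d], which follows both. *)
Lemma theta_swap_pos x i j c d : adj41 x i j c d -> theta x (swap_pos x i j).
Proof.
case/and5P=> /eqP ij ci jd /andP[jc ci'] /andP[jd' di'].
set y := swap_pos x i j.
have y_other t u dir : (t \notin [:: x i; x j]) || (u \notin [:: x i; x j]) ->
    oriented y t u dir = oriented x t u dir.
  by move=> tu; case: dir; rewrite /= before_swap_pos // orbC.
have tpermc : tperm i j c = c by rewrite tpermD // -(inj_eq val_inj) /=; lia.
have tpermd : tperm i j d = d by rewrite tpermD // -(inj_eq val_inj) /=; lia.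
have c_first z t : z \in [:: x; y] -> t \in [:: x i; x j] -> before z (x c) t.
  by rewrite !inE /before /y => /orP[]/eqP-> /orP[]/eqP->;
    rewrite ?swap_posV !permK ?tpermL ?tpermR ?tpermc /=; lia.
have d_last z t : z \in [:: x; y] -> t \in [:: x i; x j] -> before z t (x d).
  by rewrite !inE /before /y => /orP[]/eqP-> /orP[]/eqP->;
    rewrite ?swap_posV !permK ?tpermL ?tpermR ?tpermd /=; lia.
move=> t lo hi dir adj.
have [t_ij|t_ij] := boolP (t \in [:: x i; x j]); last first.
  by apply: oriented_all_eq => u _; rewrite y_other ?t_ij.
have [cdI|] := boolP ((lo <= x c < hi) && (lo <= x d < hi)).
  case/andP: cdI => cI dI.
  by rewrite !(oriented_all_straddle dir cI dI) // ?c_first ?d_last // !inE eqxx ?orbT.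
move: t_ij; rewrite !inE => /orP[]/eqP tE cdI; apply: oriented_all_eq => u uI.
all: have [->|ut] := eqVneq u t; first by case: dir; rewrite /= !before_irr.
all: rewrite y_other // !inE !negb_or -tE eqxx ut ?andbT ?andbF //=.
all: move: cdI; apply: contraNneq => uE; move: uI adj; rewrite uE tE /=; lia.
Qed.

End Theta.

Lemma exists_switch (P : pred nat) i j : i <= j -> P i -> ~~ P j ->
  exists2 k, i <= k < j & P k && ~~ P k.+1.
Proof.
elim: j => [|j IHj]; first by rewrite leqn0 => /eqP-> ->.
rewrite leq_eqVlt ltnS => /orP[/eqP-> -> //|ij Pi NPj1].
case Pj: (P j); first by exists j; rewrite ?ij ?ltnSn ?Pj.
by have [k /andP[ik kj] Pk] := IHj ij Pi (negbT Pj); exists k; rewrite // ik ltnS ltnW.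
Qed.

Section Bottom.
Variable n : nat.
Implicit Types (x y z m : 'S_n) (a b c d : 'I_n).

(* Between the positions of [b] and [a], some value [>= b] is immediately followed by
   a value [< b]; the latter lies in [(a, b)], or else the two form, with [c] and [d],
   an adjacent 41 pattern. *)
Lemma adj41_free_between m a b c d : adj41_free m -> before m b a ->
  a < c < b -> before m c b -> a < d < b -> before m a d ->
  exists2 e : 'I_n, a < e < b & before m b e && before m e a.
Proof.
move=> /adj41_freeP free ba cI cb dI ad.
pose P k := [exists q : 'I_n, (q == k :> nat) && (b <= m q)].
have Pb : P ((m^-1)%g b) by apply/existsP; exists ((m^-1)%g b); rewrite eqxx permKV leqnn.
have NPa : ~~ P ((m^-1)%g a).
  by apply/existsP => -[q /andP[/eqP/val_inj->]]; rewrite permKV; lia.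
have [k kI /andP[/existsP[q /andP[/eqP qk bq]] NPk1]] := exists_switch (ltnW ba) Pb NPa.
have k1n : k.+1 < n by have := ltn_ord ((m^-1)%g a); lia.
pose q' := Ordinal k1n.
have q'b : m q' < b.
  by rewrite ltnNge; apply: contra NPk1 => bq'; apply/existsP; exists q'; rewrite eqxx.
have [aq'|q'a] := ltnP a (m q').
  exists (m q'); first by rewrite aq'.
  have q'Na : q' != (m^-1)%g a by apply: contraTneq aq' => ->; rewrite permKV ltnn.
  move: q'Na kI; rewrite /before permK -(inj_eq val_inj) /=; lia.
have := free q q' ((m^-1)%g c) ((m^-1)%g d).
by rewrite /adj41 !permKV; move: cI dI cb ad kI; rewrite /before qk /=; lia.
Qed.

Lemma adj41_free_le m y : adj41_free m ->
  (forall a b, a < b -> oriented_all m b a b true -> before y b a) ->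
  (forall a b, a < b -> oriented_all m a a.+1 b.+1 false -> before y b a) ->
  weak_le m y.
Proof.
move=> free below above; apply/weak_leP => a b.
move: {2}(b - a) (leqnn (b - a)) => k; elim: k a b => [|k IHk] a b bak ab ba; first by lia.
have [Bb|/forallPn[c]] := boolP (oriented_all m b a b true); first exact: below.
rewrite negb_imply /= => /andP[cI Nbc].
have [Aa|/forallPn[d]] := boolP (oriented_all m a a.+1 b.+1 false); first exact: above.
rewrite negb_imply /= => /andP[dI Nda].
have cI' : a < c < b.
  case/andP: cI => + ->; rewrite leq_eqVlt andbT => /orP[/eqP/val_inj ac|//].
  by rewrite -ac ba in Nbc.
have dI' : a < d < b.
  case/andP: dI => -> /=; rewrite ltnS leq_eqVlt => /orP[/eqP/val_inj db|//].
  by rewrite db ba in Nda.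
have cb : before m c b by rewrite beforeN ?Nbc // -(inj_eq val_inj) /=; lia.
have ad : before m a d by rewrite beforeN ?Nda // -(inj_eq val_inj) /=; lia.
have [e eI /andP[be ea]] := adj41_free_between free ba cI' cb dI' ad.
by apply: (@before_trans _ _ _ e); apply: IHk => //; lia.
Qed.

Lemma adj41_free_theta_le m x y z :
  adj41_free m -> theta x m -> weak_le x y -> theta y z -> weak_le m z.
Proof.
move=> free xm xy yz; apply: adj41_free_le => // a b ab Om.
  have : oriented_all z b a b true.
    by rewrite -yz; [apply: (oriented_all_below xy) => //; rewrite xm //; left | left].
  by move/forallP/(_ a); rewrite leqnn ab.
have : oriented_all z a a.+1 b.+1 false.
  by rewrite -yz; [apply: (oriented_all_above xy) => //; rewrite xm //; right | right].
by move/forallP/(_ b); rewrite ab leqnn.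
Qed.

Lemma adj41_free_theta_eq m m' : adj41_free m -> adj41_free m' -> theta m m' -> m = m'.
Proof.
move=> free free' mm'; apply: weak_le_anti.
  exact: adj41_free_theta_le free (theta_refl m) (weak_le_refl m) mm'.
exact: adj41_free_theta_le free' (theta_refl m') (weak_le_refl m') (theta_sym mm').
Qed.

Lemma exists_adj41_free (R : 'S_n -> 'S_n -> Prop) :
  (forall x, R x x) -> (forall x y z, R x y -> R y z -> R x z) ->
  (forall x i j c d, adj41 x i j c d -> R x (swap_pos x i j)) ->
  forall x, exists2 m, adj41_free m & R x m.
Proof.
move=> Rrefl Rtrans Rswap x.
suff: forall k x, #|inv_set x| < k -> exists2 m, adj41_free m & R x m by apply; apply: ltnSn.
elim=> // k IHk {}x xk; have [free|] := boolP (adj41_free x); first by exists x.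
move=> /forallPn[i] /forallPn[j] /forallPn[c] /forallPn[d] /negPn ad.
have [m free xm] : exists2 m, adj41_free m & R (swap_pos x i j) m.
  case/and5P: (ad) => /eqP ij _ _ /andP[ji1 ji2] _; apply: IHk.
  exact: leq_trans (edge_card (swap_pos_edge ij (ltn_trans ji1 ji2))) xk.
by exists m => //; apply: Rtrans (Rswap _ _ _ _ _ ad) xm.
Qed.

Lemma exists_adj41_free_theta x : exists2 m, adj41_free m & theta x m.
Proof. exact: exists_adj41_free (@theta_refl n) (@theta_trans n) (@theta_swap_pos n) x. Qed.

Lemma theta_meet x y z m m' : theta x y -> is_meet x z m -> is_meet y z m' -> theta m m'.
Proof.
move=> xy [mx mz greatest] [my' mz' greatest'].
have [b free mb] := exists_adj41_free_theta m.
have [b' free' mb'] := exists_adj41_free_theta m'.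
have bm' : weak_le b m'.
  apply: greatest'; first exact: adj41_free_theta_le free mb mx xy.
  exact: adj41_free_theta_le free mb mz (theta_refl z).
have b'm : weak_le b' m.
  apply: greatest; first exact: adj41_free_theta_le free' mb' my' (theta_sym xy).
  exact: adj41_free_theta_le free' mb' mz' (theta_refl z).
have bb' : b = b'.
  apply: weak_le_anti; first exact: adj41_free_theta_le free (theta_refl b) bm' mb'.
  exact: adj41_free_theta_le free' (theta_refl b') b'm mb.
by apply: theta_trans mb _; rewrite bb'; apply: theta_sym.
Qed.

Lemma theta_join x y z j j' : theta x y -> is_join x z j -> is_join y z j' -> theta j j'.
Proof.
move=> xy /join_reverse jx /join_reverse jy.
by have /theta_reverse := theta_meet (theta_reverse xy) jx jy; rewrite !reverseK.
Qed.

Lemma theta_lattice_congruence : lattice_congruence (@theta n).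
Proof.
by split; [exact: theta_refl | exact: theta_sym | exact: theta_trans | exact: theta_join |
  exact: theta_meet].
Qed.

End Bottom.

Lemma perm_of_seqE k (s : seq nat) : size s = k -> uniq s -> all (gtn k) s ->
  forall i : 'I_k, perm_of_seq k s i = nth 0 s i :> nat.
Proof.
move=> sz us /all_nthP sk; have lt i : nth 0 s (i : 'I_k) < k by apply: sk; rewrite sz.
have f_inj : injective (fun i => Ordinal (lt i)).
  by move=> i j [] /eqP; rewrite nth_uniq ?sz // => /eqP/val_inj.
rewrite /perm_of_seq; case: pickP => [y /forallP y_s i|none]; first exact/eqP/y_s.
by have /forallP[] := negbT (none (perm f_inj)) => i; rewrite permE.
Qed.

Lemma p2413E (i : 'I_4) : p2413 i = nth 0 [:: 1; 3; 0; 2] i :> nat.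
Proof. exact: perm_of_seqE. Qed.

Lemma p3412E (i : 'I_4) : p3412 i = nth 0 [:: 2; 3; 0; 1] i :> nat.
Proof. exact: perm_of_seqE. Qed.

Lemma perm_inv_inord (y : 'S_4) (o : 'I_4) k : y o = k :> nat -> (y^-1)%g (inord k) = o.
Proof.
move=> yo; apply: (@perm_inj _ y); rewrite permKV; apply: val_inj.
by rewrite /= -yo inordK ?ltn_ord.
Qed.

Definition o0 : 'I_4 := @Ordinal 4 0 isT.
Definition o1 : 'I_4 := @Ordinal 4 1 isT.
Definition o2 : 'I_4 := @Ordinal 4 2 isT.
Definition o3 : 'I_4 := @Ordinal 4 3 isT.

Lemma adj41_free_four_one n (y : 'S_4) (x : 'S_n) : adj41_free x ->
  y o1 = 3 :> nat -> y o2 = 0 :> nat -> 0 < y o0 < 3 -> 0 < y o3 < 3 ->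
  four_one_nonadjacent y x.
Proof.
move=> /adj41_freeP free y1 y2 y0 y3 f [f_incr f_pat] /=.
rewrite (perm_inv_inord y1) (perm_inv_inord y2).
have f12 : f o1 < f o2 by apply: f_incr.
split; last by lia.
move=> f21; have := free (f o1) (f o2) (f o0) (f o3).
by rewrite /adj41 !f_pat y1 y2 !f_incr // f21 eqxx y0 y3.
Qed.

Lemma twisted_baxterP n (x : 'S_n) : twisted_baxter x <-> adj41_free x.
Proof.
split=> [[tb2413 tb3412]|free]; last first.
  by split; apply: adj41_free_four_one; rewrite ?p2413E ?p3412E.
apply/adj41_freeP => i j c d; apply/negP => ad.
case/and5P: ad => /eqP ij ci jd /andP[jc ci'] /andP[jd' di'].
pose f (k : 'I_4) := nth c [:: c; i; j; d] k.
have f_incr (a b : 'I_4) : a < b -> f a < f b.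
  by rewrite /f; case: a b => [[|[|[|[|?]]]] ?] [[|[|[|[|?]]]] ?] //=; lia.
have [cd|dc|/val_inj/perm_inj cd] := ltngtP (x c) (x d); last by move: ci jd; rewrite cd; lia.
  have occ : occurrence p2413 x f.
    by split=> // -[[|[|[|[|?]]]] ?] [[|[|[|[|?]]]] ?]; rewrite /f !p2413E //=; lia.
  have [] := tb2413 f occ.
  by rewrite (perm_inv_inord (p2413E o1)) (perm_inv_inord (p2413E o2)).
have occ : occurrence p3412 x f.
  by split=> // -[[|[|[|[|?]]]] ?] [[|[|[|[|?]]]] ?]; rewrite /f !p3412E //=; lia.
have [] := tb3412 f occ.
by rewrite (perm_inv_inord (p3412E o1)) (perm_inv_inord (p3412E o2)).
Qed.

Section RankBelow.
Variables (n : nat) (S : {set 'I_n}).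

Definition rank_below k := #|[set c in S | c < k]|.

Lemma rank_below_le k1 k2 : k1 <= k2 -> rank_below k1 <= rank_below k2.
Proof.
move=> k12; apply/subset_leq_card/subsetP => c; rewrite !inE.
by case/andP=> -> /leq_trans; apply.
Qed.

Lemma rank_below_lt (c : 'I_n) k : c \in S -> c < k -> rank_below c < rank_below k.
Proof.
move=> cS ck; apply: (@leq_trans #|c |: [set c' in S | c' < c]|).
  by rewrite cardsU1 !inE ltnn andbF.
apply/subset_leq_card/subsetP => c'; rewrite !inE.
by case/orP => [/eqP->|/andP[-> /ltn_trans]]; [rewrite cS ck | apply].
Qed.

Lemma rank_below_leE (c : 'I_n) k : c \in S -> (k <= c) = (rank_below k <= rank_below c).
Proof.
move=> cS; have [kc|ck] := leqP k c; first by rewrite rank_below_le.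
by rewrite leqNgt rank_below_lt.
Qed.

Lemma rank_below_ltE (c : 'I_n) k : c \in S -> (c < k) = (rank_below c < rank_below k).
Proof. by move=> cS; rewrite !ltnNge rank_below_leE. Qed.

Lemma rank_belowS (c : 'I_n) : c \in S -> rank_below c.+1 = (rank_below c).+1.
Proof.
move=> cS; rewrite /rank_below; have -> : [set c' in S | c' < c.+1] = c |: [set c' in S | c' < c].
  apply/setP => c'; rewrite !inE ltnS leq_eqVlt.
  by have [->|] := eqVneq c' c; rewrite ?eqxx ?cS //= -(inj_eq val_inj) => /negbTE->.
by rewrite cardsU1 inE ltnn andbF.
Qed.

End RankBelow.

Section Block.
Variables (n m : nat) (x : 'S_n) (w : 'S_m) (e : 'I_m -> 'I_n) (S : {set 'I_n}).
Hypothesis e_mono : forall i j, (e i < e j) = (i < j).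
Hypothesis S_def : S = [set x (e i) | i : 'I_m].
Hypothesis w_pat : forall i j, (x (e i) < x (e j)) = (w i < w j).

Lemma block_inj : injective (x \o e).
Proof.
move=> i j /perm_inj eij; have := e_mono i j; have := e_mono j i.
by rewrite eij ltnn; case: ltngtP => // /val_inj->.
Qed.

Lemma block_rank i : w i = rank_below S (x (e i)) :> nat.
Proof.
rewrite perm_rank /rank_below S_def.
have -> : [set c in [set x (e i) | i : 'I_m] | c < x (e i)] =
          (x \o e) @: [set j | w j < w i].
  apply/setP => c; rewrite inE; apply/andP/imsetP => [[/imsetP[j _ ->] lt]|[j]].
    by exists j; rewrite // inE -w_pat.
  by rewrite inE -w_pat => lt ->; rewrite imset_f.
by rewrite card_imset //; apply: block_inj.
Qed.

Lemma block_oriented_all i lo hi dir :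
  oriented_all x (x (e i)) lo hi dir =
  oriented_all w (w i) (rank_below S lo) (rank_below S hi) dir &&
  [forall c : 'I_n, ((lo <= c < hi) && (c \notin S)) ==> oriented x (x (e i)) c dir].
Proof.
have inS j : x (e j) \in S by rewrite S_def imset_f.
have in_range j : (lo <= x (e j) < hi) = (rank_below S lo <= w j < rank_below S hi).
  by rewrite block_rank -rank_below_leE ?inS // -rank_below_ltE ?inS.
have oriented_block j : oriented x (x (e i)) (x (e j)) dir = oriented w (w i) (w j) dir.
  by rewrite /oriented !before_perm !e_mono.
apply/forallP/andP => [all_x|[/forallP all_w /forallP all_out] c]; last first.
  apply/implyP => cI; have [|cNS] := boolP (c \in S); last by have := all_out c; rewrite cI cNS.
  rewrite S_def => /imsetP[j _ cE]; have := all_w (w j).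
  by rewrite -in_range -oriented_block -cE cI.
split; apply/forallP => c; last by apply/implyP => /andP[cI _]; have := all_x c; rewrite cI.
rewrite -(permKV w c) -in_range -oriented_block; apply/implyP => cI.
by have := all_x (x (e ((w^-1)%g c))); rewrite cI.
Qed.

End Block.

Section Insertion.
Variables (p q : nat) (Q : {set 'I_(p + q)}) (u : 'S_p) (v : 'S_q) (x : 'S_(p + q)).
Hypotheses (cardQ : #|Q| = p) (phi : is_phi Q u v x).

Lemma phi_left_set : Q = [set x (lshift q i) | i : 'I_p].
Proof.
case: phi => inQ _ _; apply/esym/eqP; rewrite eqEcard card_imset ?card_ord ?cardQ ?leqnn ?andbT.
  by apply/subsetP => _ /imsetP[i _ ->]; apply: inQ.
by move=> i j /perm_inj/lshift_inj.
Qed.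

Lemma phi_right_set : ~: Q = [set x (rshift p j) | j : 'I_q].
Proof.
rewrite phi_left_set; apply/setP => c; rewrite inE -(permKV x c).
case: (splitP ((x^-1)%g c)) => k kE.
  have -> : (x^-1)%g c = lshift q k by exact: val_inj.
  rewrite imset_f //=; apply/esym/negbTE/imsetP => -[j _ /perm_inj/(congr1 val) /=].
  by have := ltn_ord k; lia.
have -> : (x^-1)%g c = rshift p k by exact: val_inj.
rewrite [X in _ = X]imset_f //; apply/negP => /imsetP[j _ /perm_inj/(congr1 val) /=].
by have := ltn_ord j; lia.
Qed.

Lemma phi_rank_left i : u i = rank_below Q (x (lshift q i)) :> nat.
Proof. by case: phi => _ u_pat _; apply: (block_rank _ phi_left_set u_pat). Qed.

Lemma phi_rank_right j : v j = rank_below (~: Q) (x (rshift p j)) :> nat.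
Proof.
case: phi => _ _ v_pat; apply: (block_rank _ phi_right_set v_pat).
by move=> ? ?; rewrite /= ltn_add2l.
Qed.

Lemma left_before_right i j : before x (x (lshift q i)) (x (rshift p j)).
Proof. by rewrite before_perm /=; have := ltn_ord i; lia. Qed.

Lemma oriented_all_left i lo hi dir :
  oriented_all x (x (lshift q i)) lo hi dir =
  oriented_all u (u i) (rank_below Q lo) (rank_below Q hi) dir &&
  [forall c : 'I_(p + q), ((lo <= c < hi) && (c \notin Q)) ==> dir].
Proof.
case: phi => _ u_pat _; rewrite (block_oriented_all _ phi_left_set u_pat) //.
congr andb; apply: eq_forallb => c; rewrite -in_setC phi_right_set.
case: imsetP => [[j _ ->]|]; last by rewrite andbF.
by rewrite /oriented (before_asym (left_before_right i j)) left_before_right; case: dir.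
Qed.

Lemma oriented_all_right j lo hi dir :
  oriented_all x (x (rshift p j)) lo hi dir =
  oriented_all v (v j) (rank_below (~: Q) lo) (rank_below (~: Q) hi) dir &&
  [forall c : 'I_(p + q), ((lo <= c < hi) && (c \in Q)) ==> ~~ dir].
Proof.
case: phi => _ _ v_pat.
rewrite (block_oriented_all _ phi_right_set v_pat) => [|? ?]; last by rewrite /= ltn_add2l.
congr andb; apply: eq_forallb => c; rewrite inE negbK phi_left_set.
case: imsetP => [[i _ ->]|]; last by rewrite andbF.
by rewrite /oriented (before_asym (left_before_right i j)) left_before_right; case: dir.
Qed.

End Insertion.

Lemma theta_phi p q (Q : {set 'I_(p + q)}) (u u' : 'S_p) (v v' : 'S_q) (x x' : 'S_(p + q)) :
  #|Q| = p -> is_phi Q u v x -> is_phi Q u' v' x' -> theta u u' -> theta v v' ->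
  theta x x'.
Proof.
move=> cardQ phi phi' uu' vv' t lo hi dir adj.
have [tQ|tNQ] := boolP (t \in Q).
  move: (tQ) (tQ); rewrite {1}(phi_left_set cardQ phi) (phi_left_set cardQ phi').
  move=> /imsetP[i _ tE] /imsetP[i' _ tE'].
  have rank_t : u i = rank_below Q t :> nat by rewrite tE (phi_rank_left cardQ phi).
  rewrite [in LHS]tE [in RHS]tE' (oriented_all_left cardQ phi) (oriented_all_left cardQ phi').
  have -> : u' i' = u i by apply: val_inj; rewrite /= rank_t tE' (phi_rank_left cardQ phi').
  by congr andb; apply: uu'; rewrite rank_t; case: adj => ->; [left | right; rewrite rank_belowS].
have tNQ' : t \in ~: Q by rewrite inE.
move: (tNQ') (tNQ'); rewrite {1}(phi_right_set cardQ phi) (phi_right_set cardQ phi').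
move=> /imsetP[j _ tE] /imsetP[j' _ tE'].
have rank_t : v j = rank_below (~: Q) t :> nat by rewrite tE (phi_rank_right cardQ phi).
rewrite [in LHS]tE [in RHS]tE' (oriented_all_right cardQ phi) (oriented_all_right cardQ phi').
have -> : v' j' = v j by apply: val_inj; rewrite /= rank_t tE' (phi_rank_right cardQ phi').
by congr andb; apply: vv'; rewrite rank_t; case: adj => ->; [left | right; rewrite rank_belowS].
Qed.

Lemma oriented_all_minn n (x : 'S_n) t lo hi dir :
  oriented_all x t lo hi dir = oriented_all x t (minn lo n) (minn hi n) dir.
Proof. by apply: eq_forallb => c; congr (_ ==> _); have := ltn_ord c; lia. Qed.

Section DirectSum.
Variables p q : nat.

Definition dsum_set : {set 'I_(p + q)} := [set c : 'I_(p + q) | c < p].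

Lemma card_dsum_set : #|dsum_set| = p.
Proof. by rewrite card_ord_lt // leq_addr. Qed.

Lemma dsum_lshift (u : 'S_p) (v : 'S_q) i : dsum u v (lshift q i) = lshift q (u i).
Proof. by rewrite permE /dsum_fun (unsplitK (inl i)). Qed.

Lemma dsum_rshift (u : 'S_p) (v : 'S_q) j : dsum u v (rshift p j) = rshift p (v j).
Proof. by rewrite permE /dsum_fun (unsplitK (inr j)). Qed.

Lemma dsum_phi (u : 'S_p) (v : 'S_q) : is_phi dsum_set u v (dsum u v).
Proof. by split=> [i|i j|i j]; rewrite ?dsum_lshift ?dsum_rshift ?inE //= ltn_add2l. Qed.

Lemma rank_dsum_set k : rank_below dsum_set k = minn k p.
Proof.
rewrite -(@card_ord_lt (p + q) (minn k p)); last by lia.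
by apply: eq_card => c; rewrite !inE; lia.
Qed.

Lemma rank_dsum_setC k : k <= q -> rank_below (~: dsum_set) (p + k) = k.
Proof.
move=> kq; rewrite /rank_below -[RHS](card_ord_lt kq) -(card_imset _ (@rshift_inj p q)).
apply: eq_card => c; rewrite !inE; apply/andP/imsetP => [[cp ck]|[j]].
  have cpq : c - p < q by have := ltn_ord c; lia.
  by exists (Ordinal cpq); rewrite ?inE /=; [lia | apply: val_inj => /=; lia].
by rewrite inE => jk ->; rewrite /= ltn_add2l jk; split=> //; lia.
Qed.

Lemma theta_dsum (u u' : 'S_p) (v v' : 'S_q) :
  theta (dsum u v) (dsum u' v') <-> theta u u' /\ theta v v'.
Proof.
split=> [uv|[uu' vv']]; last exact: theta_phi card_dsum_set (dsum_phi u v) (dsum_phi u' v') uu' vv'.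
split=> t lo hi dir adj; rewrite oriented_all_minn [RHS]oriented_all_minn.
  have oriented_u (w : 'S_p) (z : 'S_q) := oriented_all_left card_dsum_set (dsum_phi w z)
    ((w^-1)%g t) (minn lo p) (minn hi p) dir.
  move: (oriented_u u v) (oriented_u u' v'); rewrite !dsum_lshift !permKV !rank_dsum_set.
  rewrite -!minnA !minnn; set outside := [forall c, _].
  have -> : outside by apply/forallP => c; rewrite inE; apply/implyP; lia.
  by rewrite !andbT => <- <-; apply: uv; rewrite /=; have := ltn_ord t; lia.
have oriented_v (w : 'S_p) (z : 'S_q) := oriented_all_right card_dsum_set (dsum_phi w z)
  ((z^-1)%g t) (p + minn lo q) (p + minn hi q) dir.
move: (oriented_v u v) (oriented_v u' v').
rewrite !dsum_rshift !permKV !rank_dsum_setC ?geq_minr //; set outside := [forall c, _].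
have -> : outside by apply/forallP => c; rewrite inE; apply/implyP; lia.
by rewrite !andbT => <- <-; apply: uv; rewrite /=; have := ltn_ord t; lia.
Qed.

End DirectSum.

Definition theta_family : Defs.family := fun n => @theta n.
Arguments theta_family : clear implicits.

Lemma theta_H_family : H_family theta_family.
Proof.
split=> [n|p q u u' v v'|p q Q u u' v v' x x']; first exact: theta_lattice_congruence.
  exact: theta_dsum.
exact: theta_phi.
Qed.

Lemma perm_ltn_inj n (s s' : 'S_n) : (forall i j, (s i < s j) = (s' i < s' j)) -> s = s'.
Proof.
move=> ss'; apply/permP => i; apply: val_inj.
by rewrite /= perm_rank [RHS]perm_rank; apply: eq_card => j; rewrite !inE ss'.
Qed.

Section Standardization.
Variables (m n : nat) (f : 'I_m -> 'I_n).
Hypothesis f_inj : injective f.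

Lemma std_rank_subproof i : #|[set j | f j < f i]| < m.
Proof.
have : #|[set j | f j < f i]| <= #|[set~ i]|.
  by apply/subset_leq_card/subsetP => j; rewrite !inE; apply: contraTneq => ->; rewrite ltnn.
by rewrite cardsC1 card_ord; have := ltn_ord i; lia.
Qed.

Definition std_rank i : 'I_m := Ordinal (std_rank_subproof i).

Lemma std_rank_ltE i j : (std_rank i < std_rank j) = (f i < f j).
Proof.
rewrite /=; have [lt_ij|le_ji] := ltnP (f i) (f j).
  apply: proper_card; apply/properP; split; last by exists i; rewrite !inE ?ltnn.
  by apply/subsetP => k; rewrite !inE => /ltn_trans; apply.
by rewrite ltnNge; apply/negbF/subset_leq_card/subsetP => k; rewrite !inE => /leq_trans; apply.
Qed.

Lemma std_rank_inj : injective std_rank.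
Proof.
move=> i j ij; apply: f_inj; apply: val_inj.
by have := std_rank_ltE i j; have := std_rank_ltE j i; rewrite ij ltnn /=; lia.
Qed.

Definition std : 'S_m := perm std_rank_inj.

Lemma stdE i j : (std i < std j) = (f i < f j).
Proof. by rewrite !permE std_rank_ltE. Qed.

End Standardization.

Section Parts.
Variables p q : nat.
Implicit Types x y : 'S_(p + q).

Definition left_vals x : {set 'I_(p + q)} := [set x (lshift q i) | i : 'I_p].
Definition left_part x : 'S_p := std (inj_comp (@perm_inj _ x) (@lshift_inj p q)).
Definition right_part x : 'S_q := std (inj_comp (@perm_inj _ x) (@rshift_inj p q)).

Lemma card_left_vals x : #|left_vals x| = p.
Proof. by rewrite card_imset ?card_ord // => i j /perm_inj/lshift_inj. Qed.

Lemma parts_phi x : is_phi (left_vals x) (left_part x) (right_part x) x.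
Proof. by split=> [i|i j|i j]; rewrite ?imset_f ?stdE. Qed.

Lemma H_family_parts (T : Defs.family) x y : H_family T ->
  left_vals x = left_vals y -> T p (left_part x) (left_part y) ->
  T q (right_part x) (right_part y) -> T (p + q) x y.
Proof.
case=> _ _ ins xy Tl Tr; apply: ins (card_left_vals x) (parts_phi x) _ Tl Tr.
by rewrite xy; apply: parts_phi.
Qed.

Lemma lshiftP (k : 'I_(p + q)) : k < p -> exists k' : 'I_p, k = lshift q k'.
Proof. by case: (splitP k) => k' kE; [exists k'; apply: val_inj | have := ltn_ord k'; lia]. Qed.

Lemma rshiftP (k : 'I_(p + q)) : p <= k -> exists k' : 'I_q, k = rshift p k'.
Proof. by case: (splitP k) => k' kE; [have := ltn_ord k'; lia | exists k'; apply: val_inj]. Qed.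

Lemma lshift_neq_rshift (i : 'I_p) (j : 'I_q) : lshift q i != rshift p j.
Proof. by rewrite -(inj_eq val_inj) /=; have := ltn_ord i; lia. Qed.

Lemma adj41_left_part x i j c d :
  adj41 (left_part x) i j c d = adj41 x (lshift q i) (lshift q j) (lshift q c) (lshift q d).
Proof. by rewrite /adj41 !stdE. Qed.

Lemma adj41_right_part x i j c d :
  adj41 (right_part x) i j c d = adj41 x (rshift p i) (rshift p j) (rshift p c) (rshift p d).
Proof. by rewrite /adj41 !stdE /= -addnS eqn_add2l !ltn_add2l. Qed.

Section SwapRight.
Variables (x : 'S_(p + q)) (i j : 'I_q).
Let y := swap_pos x (rshift p i) (rshift p j).

Lemma swap_right_lshift k : y (lshift q k) = x (lshift q k).
Proof. by rewrite swap_posE tpermD // eq_sym lshift_neq_rshift. Qed.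

Lemma swap_right_rshift k : y (rshift p k) = x (rshift p (tperm i j k)).
Proof. by rewrite swap_posE (inj_tperm _ _ _ (@rshift_inj p q)). Qed.

Lemma left_vals_swap_right : left_vals y = left_vals x.
Proof. by apply: eq_imset => k; rewrite swap_right_lshift. Qed.

Lemma left_part_swap_right : left_part y = left_part x.
Proof. by apply: perm_ltn_inj => k l; rewrite !stdE /= !swap_right_lshift. Qed.

Lemma right_part_swap_right : right_part y = swap_pos (right_part x) i j.
Proof. by apply: perm_ltn_inj => k l; rewrite !swap_posE !stdE /= !swap_right_rshift. Qed.

End SwapRight.

Section SwapLeft.
Variables (x : 'S_(p + q)) (i j : 'I_p).
Let y := swap_pos x (lshift q i) (lshift q j).

Lemma swap_left_rshift k : y (rshift p k) = x (rshift p k).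
Proof. by rewrite swap_posE tpermD // lshift_neq_rshift. Qed.

Lemma swap_left_lshift k : y (lshift q k) = x (lshift q (tperm i j k)).
Proof. by rewrite swap_posE (inj_tperm _ _ _ (@lshift_inj p q)). Qed.

Lemma left_vals_swap_left : left_vals y = left_vals x.
Proof.
apply/setP => c; apply/imsetP/imsetP => -[k _ ->].
  by exists (tperm i j k); rewrite ?swap_left_lshift.
by exists (tperm i j k); rewrite ?swap_left_lshift ?tpermK.
Qed.

Lemma right_part_swap_left : right_part y = right_part x.
Proof. by apply: perm_ltn_inj => k l; rewrite !stdE /= !swap_left_rshift. Qed.

Lemma left_part_swap_left : left_part y = swap_pos (left_part x) i j.
Proof. by apply: perm_ltn_inj => k l; rewrite !swap_posE !stdE /= !swap_left_lshift. Qed.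

End SwapLeft.

End Parts.

Lemma perm_eq_before n (y z : 'S_n) :
  (forall p1 p2 : 'I_n, p1 < p2 -> before z (y p1) (y p2)) -> z = y.
Proof.
move=> yz; apply: (@before_inj n z y) => u v; rewrite -(permKV y u) -(permKV y v) before_perm.
set p1 := (y^-1)%g u; set p2 := (y^-1)%g v.
have [lt12|lt21|/val_inj->] := ltngtP p1 p2; last by rewrite before_irr.
  exact: yz.
by rewrite before_asym // yz.
Qed.

Lemma ord4_cases (k : 'I_4) : [\/ k = o0, k = o1, k = o2 | k = o3].
Proof.
case: k => -[|[|[|[|//]]]] k4; [constructor 1|constructor 2|constructor 3|constructor 4];
  exact: val_inj.
Qed.

Lemma perm4_eq (y z : 'S_4) : before z (y o0) (y o1) -> before z (y o1) (y o2) ->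
  before z (y o2) (y o3) -> z = y.
Proof.
move=> b01 b12 b23; have b02 := before_trans b01 b12; have b13 := before_trans b12 b23.
have b03 := before_trans b02 b23; apply: perm_eq_before => p1 p2.
by case: (ord4_cases p1) => ->; case: (ord4_cases p2) => -> // _.
Qed.

Lemma weak_le_noninv n (z y : 'S_n) (p1 p2 : 'I_n) : weak_le z y -> p1 < p2 -> y p1 < y p2 ->
  before z (y p1) (y p2).
Proof.
move/weak_leP => zy lt12 ylt12.
have yne : y p1 != y p2 by rewrite -(inj_eq val_inj) /= neq_ltn ylt12.
rewrite beforeN //; apply: contraTN lt12 => /(zy _ _ ylt12).
by rewrite before_perm -leqNgt => /ltnW.
Qed.

Lemma adj41_4_join_irr (y z : 'S_4) : adj41 y o1 o2 o0 o3 ->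
  weak_le z y -> (y o2, y o1) \in inv_set z -> z = y.
Proof.
case/and5P=> _ _ _ /andP[y20 y01] /andP[y23 y31] zy; rewrite inv_setE => /andP[_ b12].
by apply: perm4_eq => //; apply: weak_le_noninv => //; lia.
Qed.

Lemma contracts_adj41 (R : 'S_4 -> 'S_4 -> Prop) (y : 'S_4) :
  adj41 y o1 o2 o0 o3 -> contracts R y -> R y (swap_pos y o1 o2).
Proof.
move=> ad [ys [cov Rys]]; case/and5P: (ad) => _ _ _ /andP[y20 y01] _.
have y_irr z := @adj41_4_join_irr y z ad.
by rewrite -(covers_edge_unique cov (swap_pos_edge _ (ltn_trans y20 y01)) y_irr).
Qed.

Lemma adj41_4_cases (y : 'S_4) : adj41 y o1 o2 o0 o3 -> y = p2413 \/ y = p3412.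
Proof.
case/and5P=> _ _ _ /andP[y20 y01] /andP[y23 y31].
have y03 : y o0 != y o3 :> nat by rewrite (inj_eq val_inj) (inj_eq perm_inj).
have := ltn_ord (y o0); have := ltn_ord (y o1); have := ltn_ord (y o2); have := ltn_ord (y o3).
move=> b3 b2 b1 b0; have [y0|y0] := eqVneq (y o0 : nat) 1; [left|right];
  apply: perm_ltn_inj => a b; case: (ord4_cases a) => ->; case: (ord4_cases b) => ->;
  rewrite ?p2413E ?p3412E /=; lia.
Qed.

Section Front.
Variables (m : nat) (z : 'I_m.+1).
Implicit Types (x : 'S_m.+1) (k l : 'I_m.+1).

Definition front_pos k : 'I_m.+1 := inord (if k == z then 0 else if k < z then k.+1 else k).

Lemma front_posE k : front_pos k = (if k == z then 0 else if k < z then k.+1 else k) :> nat.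
Proof.
rewrite inordK //; have := ltn_ord k; have := ltn_ord z.
by do ![case: ifP => ?]; lia.
Qed.

Lemma front_pos_inj : injective front_pos.
Proof.
move=> k l /(congr1 val); rewrite /= !front_posE -!(inj_eq val_inj) /= => kl.
by apply: val_inj => /=; move: kl; do ![case: ifP => ?]; lia.
Qed.

Definition front_shift : 'S_m.+1 := perm front_pos_inj.

Lemma front_shift_lt k l : k != z -> l != z -> (front_shift k < front_shift l) = (k < l).
Proof.
rewrite !permE !front_posE -!(inj_eq val_inj) /= => kz lz; rewrite (negbTE kz) (negbTE lz).
by do ![case: ifP => ?]; apply/idP/idP; lia.
Qed.

Lemma front_shift_z k : k != z -> front_shift z < front_shift k.
Proof.
rewrite !permE !front_posE eqxx -(inj_eq val_inj) /= => kz; rewrite (negbTE kz).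
by case: ifP => ?; lia.
Qed.

Definition front x : 'S_m.+1 := (front_shift^-1 * x)%g.

Lemma frontE x k : front x (front_shift k) = x k.
Proof. by rewrite permM permK. Qed.

Lemma before_front x u v :
  before (front x) u v = (front_shift ((x^-1)%g u) < front_shift ((x^-1)%g v)).
Proof. by rewrite /before invMg invgK !permM. Qed.

Lemma front_swap x i j :
  swap_pos (front x) (front_shift i) (front_shift j) = front (swap_pos x i j).
Proof.
apply/permP => k; rewrite -(permKV front_shift k) frontE !swap_posE.
by rewrite -(inj_tperm _ _ _ (@perm_inj _ front_shift)) frontE.
Qed.

Lemma before_front_other x u v : u != x z -> v != x z -> before (front x) u v = before x u v.
Proof.
move=> uz vz; rewrite before_front front_shift_lt //.
  by apply: contra uz => /eqP <-; rewrite permKV.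
by apply: contra vz => /eqP <-; rewrite permKV.
Qed.

Lemma before_front_first x v : v != x z -> before (front x) (x z) v.
Proof.
move=> vz; rewrite before_front permK; apply: front_shift_z.
by apply: contra vz => /eqP <-; rewrite permKV.
Qed.

Lemma weak_le_front x : x z = m :> nat -> weak_le x (front x).
Proof.
move=> xzm; apply/weak_leP => a b ab bx.
have az : a != x z by rewrite -(inj_eq val_inj) /= xzm neq_ltn; have := ltn_ord b; lia.
have [->|bz] := eqVneq b (x z); first exact: before_front_first.
by rewrite before_front_other.
Qed.

Lemma front_weak_le x : x z = 0 :> nat -> weak_le (front x) x.
Proof.
move=> xz0; apply/weak_leP => a b ab bx.
have bz : b != x z by rewrite -(inj_eq val_inj) /= xz0 neq_ltn; lia.
have [az|az] := eqVneq a (x z); last by rewrite -before_front_other.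
by rewrite az before_asym ?before_front_first in bx.
Qed.

End Front.

Section Forcing.
Variable T : Defs.family.
Arguments T : clear implicits.
Hypothesis HT : H_family T.

Definition swaps_contracted m :=
  forall (x : 'S_m) i j c d, adj41 x i j c d -> T m x (swap_pos x i j).

Lemma H_family_congruence n : lattice_congruence (T n).
Proof. by case: HT. Qed.

Lemma H_family_refl n (x : 'S_n) : T n x x.
Proof. by case: (H_family_congruence n). Qed.

Lemma H_family_sym n (x y : 'S_n) : T n x y -> T n y x.
Proof. by case: (H_family_congruence n) => _ sym _ _ _; apply: sym. Qed.

Lemma adj41_right_contracted p q (x : 'S_(p + q)) (i j c d : 'I_(p + q)) :
  swaps_contracted q -> p <= c -> adj41 x i j c d -> T (p + q) x (swap_pos x i j).
Proof.
move=> Hq pc ad; have := ad; case/and5P=> /eqP ij ci jd _ _.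
have [c' cE] := rshiftP pc; have [i' iE] : exists i', i = rshift p i' by apply: rshiftP; lia.
have [j' jE] : exists j', j = rshift p j' by apply: rshiftP; lia.
have [d' dE] : exists d', d = rshift p d' by apply: rshiftP; lia.
rewrite iE jE; apply: H_family_parts => //.
- by rewrite left_vals_swap_right.
- by rewrite left_part_swap_right; apply: H_family_refl.
by rewrite right_part_swap_right; apply: (Hq _ _ _ c' d'); rewrite adj41_right_part -iE -jE -cE -dE.
Qed.

Lemma adj41_left_contracted p q (x : 'S_(p + q)) (i j c d : 'I_(p + q)) :
  swaps_contracted p -> d < p -> adj41 x i j c d -> T (p + q) x (swap_pos x i j).
Proof.
move=> Hp dp ad; have := ad; case/and5P=> /eqP ij ci jd _ _.
have [d' dE] := lshiftP dp; have [i' iE] : exists i', i = lshift q i' by apply: lshiftP; lia.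
have [j' jE] : exists j', j = lshift q j' by apply: lshiftP; lia.
have [c' cE] : exists c', c = lshift q c' by apply: lshiftP; lia.
rewrite iE jE; apply: H_family_parts => //.
- by rewrite left_vals_swap_left.
- by rewrite left_part_swap_left; apply: (Hp _ _ _ c' d'); rewrite adj41_left_part -iE -jE -cE -dE.
by rewrite right_part_swap_left; apply: H_family_refl.
Qed.

(* Moving the largest (smallest) entry to the front only adds (removes) inversions
   involving [x z], so swapping [x i] and [x j] in [x] and in [front z x] gives
   parallel edges of the weak order. *)
Lemma front_contracted m (x : 'S_m.+1) (i j c d z : 'I_m.+1) :
  swaps_contracted m -> adj41 x i j c d -> z \notin [:: i; j; c; d] ->
  x z = m :> nat \/ x z = 0 :> nat -> T m.+1 x (swap_pos x i j).
Proof.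
move=> Hm ad; have := ad; case/and5P=> /eqP ij ci jd /andP[jc ci'] /andP[jd' di'].
rewrite !inE !negb_or ![z == _]eq_sym => /and4P[iz jz cz dz] xz.
have fij : front_shift z j = (front_shift z i).+1 :> nat.
  move: (iz) (jz); rewrite !permE !front_posE -!(inj_eq val_inj) /= => iz' jz'.
  by rewrite (negbTE iz') (negbTE jz'); do ![case: ifP => ?]; lia.
have ad' : adj41 (front z x)
    (front_shift z i) (front_shift z j) (front_shift z c) (front_shift z d).
  by rewrite /adj41 !frontE !front_shift_lt // fij eqxx jc ci' jd' di' ci jd.
have c0 : 0 < front_shift z c by apply: leq_ltn_trans (front_shift_z cz).
have := adj41_right_contracted (p := 1) Hm c0 ad'; rewrite front_swap => contracted_front.
have e1 := swap_pos_edge ij (ltn_trans jc ci').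
have e2 : edge (front z (swap_pos x i j)) (front z x) (x j, x i).
  have := @swap_pos_edge _ (front z x) _ _ fij; rewrite !frontE front_swap.
  by apply; apply: ltn_trans jc ci'.
have xz' : swap_pos x i j z = x z by rewrite swap_posE tpermD // eq_sym.
case: xz => xz; apply: H_family_sym.
  have le : weak_le (swap_pos x i j) (front z (swap_pos x i j)).
    by apply: weak_le_front; rewrite xz'.
  by apply/(lattice_congruence_edge (H_family_congruence _) e1 e2 le)/H_family_sym.
have le : weak_le (front z (swap_pos x i j)) (swap_pos x i j).
  by apply: front_weak_le; rewrite xz'.
by apply/(lattice_congruence_edge (H_family_congruence _) e2 e1 le)/H_family_sym.
Qed.

Hypotheses (T3412 : contracts (T 4) p3412) (T2413 : contracts (T 4) p2413).

Lemma adj41_4_contracted (x : 'S_4) : adj41 x o1 o2 o0 o3 -> T 4 x (swap_pos x o1 o2).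
Proof. by move=> ad; case: (adj41_4_cases ad) => xE; apply: contracts_adj41 => //; rewrite xE. Qed.

Lemma adj41_short_contracted m (x : 'S_m.+1) i j c d : swaps_contracted m ->
  adj41 x i j c d -> (0 < c) || (d < m) -> T m.+1 x (swap_pos x i j).
Proof.
move=> Hm ad /orP[c0|dm]; first exact: (adj41_right_contracted (p := 1) Hm c0 ad).
move: x i j c d ad dm; rewrite -[m.+1]addn1 => x i j c d ad dm.
exact: adj41_left_contracted Hm dm ad.
Qed.

(* If the occurrence spans all positions, then a fifth entry [x z] either lies
   between [x j] and [x i], giving an occurrence that does not span, or the largest
   (smallest) entry lies outside the occurrence and can be moved to the front. *)
Lemma swaps_contracted_step m : swaps_contracted m -> swaps_contracted m.+1.
Proof.
move=> Hm x i j c d ad; have [|] := boolP ((0 < c) || (d < m)).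
  exact: adj41_short_contracted.
rewrite negb_or -leqNgt -ltnNge => /andP[c0 md].
have := ad; case/and5P=> /eqP ij ci jd /andP[jc ci'] /andP[jd' di'].
have dm := ltn_ord d; have [m3|m3] := eqVneq m 3.
  subst m; have iE : i = o1 by apply: val_inj => /=; lia.
  have jE : j = o2 by apply: val_inj => /=; lia.
  have cE : c = o0 by apply: val_inj => /=; lia.
  have dE : d = o3 by apply: val_inj => /=; lia.
  by rewrite iE jE; apply: adj41_4_contracted; rewrite -iE -jE -cE -dE.
have [z zN zI] : exists2 z : 'I_m.+1, z \notin [:: i; j; c; d] & (0 < z < i) || (j < z < m).
  have [i1|i1] := ltnP 1 i; [exists (inord 1) | exists (inord 3)];
  by rewrite ?inE -?(inj_eq val_inj) /= inordK //; lia.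
have [zin|zout] := boolP (x j < x z < x i).
  case/orP: zI => /andP[z0 zI].
    apply: (@adj41_short_contracted _ _ _ _ z d Hm); rewrite ?z0 //.
    by rewrite /adj41 zI jd zin jd' di' ij eqxx.
  apply: (@adj41_short_contracted _ _ _ _ c z Hm); rewrite ?zI ?orbT //.
  by rewrite /adj41 ci z0 jc ci' zin ij eqxx.
have zNij : (x z != x i) && (x z != x j).
  by move: zN; rewrite !inE !negb_or (inj_eq perm_inj) (inj_eq perm_inj) => /and4P[-> -> _ _].
have [xiz|xzj] : x i < x z \/ x z < x j.
  by move: zout zNij; rewrite -!(inj_eq val_inj) /=; lia.
  apply: (front_contracted Hm ad (z := (x^-1)%g ord_max)); last by left; rewrite permKV.
  apply/negP; rewrite !inE => /or4P[]/eqP/(congr1 x); rewrite permKV => /(congr1 val) /=;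
  by have := ltn_ord (x z); lia.
apply: (front_contracted Hm ad (z := (x^-1)%g ord0)); last by right; rewrite permKV.
by apply/negP; rewrite !inE => /or4P[]/eqP/(congr1 x); rewrite permKV => /(congr1 val) /=; lia.
Qed.

Lemma swaps_contracted_all n : swaps_contracted n.
Proof. by elim: n => [x [] //|m /swaps_contracted_step]. Qed.

End Forcing.

Lemma contracts_swap_pos n (R : 'S_n -> 'S_n -> Prop) (x : 'S_n) i j c d :
  adj41 x i j c d -> R x (swap_pos x i j) -> contracts R x.
Proof.
case/and5P=> /eqP ij _ _ /andP[jc ci] _ Rx; exists (swap_pos x i j); split=> //.
exact: edge_covers (swap_pos_edge ij (ltn_trans jc ci)).
Qed.

Lemma adj41_p2413 : adj41 p2413 o1 o2 o0 o3. Proof. by rewrite /adj41 !p2413E. Qed.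
Lemma adj41_p3412 : adj41 p3412 o1 o2 o0 o3. Proof. by rewrite /adj41 !p3412E. Qed.

Lemma theta_contracts_C_9p7 c : List.In c C_9p7 -> contracts (theta_family (projT1 c)) (projT2 c).
Proof.
case=> [<-|[<-|[]]].
  exact: contracts_swap_pos adj41_p3412 (theta_swap_pos adj41_p3412).
exact: contracts_swap_pos adj41_p2413 (theta_swap_pos adj41_p2413).
Qed.

Lemma HC_theta n (x y : 'S_n) : HC C_9p7 n x y <-> theta x y.
Proof.
split=> [HCxy|xy T HT contractsT]; first exact: HCxy theta_H_family theta_contracts_C_9p7.
have T3412 := contractsT (existT _ 4 p3412) (or_introl erefl).
have T2413 := contractsT (existT _ 4 p2413) (or_intror (or_introl erefl)).
case: (H_family_congruence HT n) => _ Tsym Ttrans _ _.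
pose R a b := T n a b /\ theta a b.
have Rrefl a : R a a by split; [apply: H_family_refl | apply: theta_refl].
have Rtrans a b c : R a b -> R b c -> R a c.
  by case=> ab ab' [bc bc']; split; [apply: Ttrans ab bc | apply: theta_trans ab' bc'].
have Rswap a i j c d : adj41 a i j c d -> R a (swap_pos a i j).
  by move=> ad; split; [apply: swaps_contracted_all ad | apply: theta_swap_pos ad].
have [mx free_x [xmx xmx']] := exists_adj41_free Rrefl Rtrans Rswap x.
have [my free_y [ymy ymy']] := exists_adj41_free Rrefl Rtrans Rswap y.
have mxy : mx = my.
  apply: adj41_free_theta_eq free_x free_y _.
  exact: theta_trans (theta_sym xmx') (theta_trans xy ymy').
by apply: Ttrans xmx _; rewrite mxy; apply: Tsym.
Qed.

Section Quotient.
Variable n : nat.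
Implicit Types (A : {set 'S_n}) (x y : 'S_n).

Definition thetab x y := [forall t : 'I_n, forall lo : 'I_n.+1, forall hi : 'I_n.+1, forall dir,
  ((hi == t :> nat) || (lo == t.+1 :> nat)) ==>
  (oriented_all x t lo hi dir == oriented_all y t lo hi dir)].

Lemma thetaP x y : reflect (theta x y) (thetab x y).
Proof.
apply: (iffP forallP) => [xy t lo hi dir adj|xy t].
  rewrite oriented_all_minn [RHS]oriented_all_minn.
  have lo_n : minn lo n < n.+1 by rewrite ltnS geq_minr.
  have hi_n : minn hi n < n.+1 by rewrite ltnS geq_minr.
  have /forallP/(_ (Ordinal lo_n))/forallP/(_ (Ordinal hi_n))/forallP/(_ dir) := xy t.
  by move=> /implyP/(_ _)/eqP; apply; have := ltn_ord t; rewrite /=; lia.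
do 3!apply/forallP => ?; apply/implyP => /orP[]/eqP adj; apply/eqP/xy; by [left | right].
Qed.

Lemma class_theta A x y : is_class (HC C_9p7 n) A -> x \in A -> y \in A -> theta x y.
Proof.
case=> a Aa /Aa /HC_theta ax /Aa /HC_theta ay.
exact: theta_trans (theta_sym ax) ay.
Qed.

Definition class_bottom A : 'S_n := odflt 1%g [pick m in A | adj41_free m].

Lemma class_bottomP A :
  is_class (HC C_9p7 n) A -> adj41_free (class_bottom A) /\ class_bottom A \in A.
Proof.
case=> a Aa; rewrite /class_bottom; case: pickP => [m /andP[mA free] //|none].
have [m free am] := exists_adj41_free_theta a.
by have := none m; rewrite free andbT => /negP[]; apply/Aa/HC_theta.
Qed.

Lemma theta_class x : is_class (HC C_9p7 n) [set y | thetab x y].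
Proof. by exists x => y; rewrite inE HC_theta; split=> /thetaP. Qed.

Lemma class_bottom_theta x : adj41_free x -> class_bottom [set y | thetab x y] = x.
Proof.
move=> free; have [free' ] := class_bottomP (theta_class x); rewrite inE => /thetaP xb.
exact: adj41_free_theta_eq free' free (theta_sym xb).
Qed.

Lemma theta_class_bottom A : is_class (HC C_9p7 n) A -> [set y | thetab (class_bottom A) y] = A.
Proof.
move=> clA; have [_ bA] := class_bottomP clA.
apply/setP => y; rewrite inE; apply/thetaP/idP => [by'|yA]; last exact: class_theta yA.
by case: clA bA => a Aa /Aa /HC_theta ab; apply/Aa/HC_theta; apply: theta_trans ab by'.
Qed.

Lemma quot_le_class_bottom A B : is_class (HC C_9p7 n) A -> is_class (HC C_9p7 n) B ->
  quot_le A B <-> weak_le (class_bottom A) (class_bottom B).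
Proof.
move=> clA clB; have [freeA bA] := class_bottomP clA; have [freeB bB] := class_bottomP clB.
split=> [[x [y [xA yB xy]]]|le_b]; last by exists (class_bottom A), (class_bottom B).
exact: adj41_free_theta_le freeA (class_theta clA xA bA) xy (class_theta clB yB bB).
Qed.

End Quotient.

Theorem theorem9p7 (n : nat) :
  exists f : {A : {set 'S_n} | is_class (HC C_9p7 n) A} ->
             {x : 'S_n | twisted_baxter x},
    bijective f /\
    forall A B : {A : {set 'S_n} | is_class (HC C_9p7 n) A},
      quot_le (proj1_sig A) (proj1_sig B) <->
      weak_le (proj1_sig (f A)) (proj1_sig (f B)).
Proof.
pose f (A : {A | is_class (HC C_9p7 n) A}) : {x | twisted_baxter x} :=
  exist _ _ ((twisted_baxterP _).2 (class_bottomP (proj2_sig A)).1).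
pose g (x : {x | twisted_baxter x}) : {A | is_class (HC C_9p7 n) A} :=
  exist _ _ (theta_class (proj1_sig x)).
exists f; split=> [|[A clA] [B clB]]; last exact: quot_le_class_bottom.
exists g => [[A clA]|[x tbx]]; apply: subset_eq_compat.
  exact: theta_class_bottom.
by apply: class_bottom_theta; apply/twisted_baxterP.
Qed.
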